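(* Let $m\le n$ be nonnegative integers and $\delta=(\delta_1,\dots,\delta_m)\in\mathbb N^m$. Then every highest weight vertex $b=b_1\otimes\cdots\otimes b_m$ of the $C_n$-crystal $B^{C_n}_\delta=B^{C_n}_{\delta_1}\otimes\cdots\otimes B^{C_n}_{\delta_m}$ contains only letters from the set $\{1,2,\dots,m,\overline{m-1},\overline{m-2},\dots,\overline{1}\}$ (i.e., every letter of every word $b_j$ lies in this set).
   Context: The crystal $B_1^{C_n}$ of the vector representation of $U_q(\mathfrak{sp}_{2n})$ has vertices $1,\dots,n,\overline n,\dots,\overline1$, weights $\mathrm{wt}(i)=\varepsilon_i$, $\mathrm{wt}(\overline i)=-\varepsilon_i$, and arrows $i\xrightarrow{i}i+1$, $\overline{i+1}\xrightarrow{i}\overline i$ for $1\le i<n$, $n\xrightarrow{n}\overline n$. $B^{C_n}_s$ is the Kashiwara–Nakashima crystal $B(s\omega_1)$, whose vertices are labelled by the weakly decreasing words $x_1x_2\cdots x_s$ ($x_1\ge\cdots\ge x_s$) in the ordered alphabet $1<2<\cdots<n<\overline n<\cdots<\overline1$; $B_0$ has one vertex (the empty word). Tensor products use the rule $\tilde f_i(b\otimes b')=\tilde f_ib\otimes b'$ if $\varphi_i(b)>\varepsilon_i(b')$ and $b\otimes\tilde f_ib'$ otherwise; $\tilde e_i(b\otimes b')=\tilde e_ib\otimes b'$ if $\varphi_i(b)\ge\varepsilon_i(b')$ and $b\otimes\tilde e_ib'$ otherwise. A highest weight vertex is one with $\varepsilon_i(b)=0$ for all $i\in\{1,\dots,n\}$.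 *)

From mathcomp Require Import all_boot.
Set Implicit Arguments. Unset Strict Implicit. Unset Printing Implicit Defensive.

(* Letters of the crystal B_1 of type C_n.
   [Unb i] is the letter (i+1) and [Bar i] is the letter \overline{i+1},
   for i : 'I_n (so the letters are 1..n, \bar n .. \bar 1). *)
Inductive letter (n : nat) : Type :=
| Unb of 'I_n
| Bar of 'I_n.

Definition lval n (x : letter n) : nat :=
  match x with Unb i => (val i).+1 | Bar i => (val i).+1 end.

(* position in the total order 1 < 2 < ... < n < \bar n < ... < \bar 1 *)
Definition lrank n (x : letter n) : nat :=
  match x with Unb i => val i | Bar i => (2 * n).-1 - val i end.

(* vertices of B_s = B(s omega_1): weakly decreasing words x_1 >= ... >= x_s *)
Definition decreasing_word n (w : seq (letter n)) : bool :=
  sorted (fun x y => lrank y <= lrank x) w.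

(* phi_i and eps_i on B_1, for i in {1..n}, from the arrows
   i -i-> i+1,  \bar(i+1) -i-> \bar i  (1 <= i < n),  n -n-> \bar n. *)
Definition phi1 n (i : nat) (x : letter n) : nat :=
  match x with
  | Unb j => if lval x == i then 1 else 0
  | Bar j => if (i < n) && (lval x == i.+1) then 1 else 0
  end.
Definition eps1 n (i : nat) (x : letter n) : nat :=
  match x with
  | Unb j => if (i < n) && (lval x == i.+1) then 1 else 0
  | Bar j => if lval x == i then 1 else 0
  end.

(* eps_i and phi_i of the tensor product x_1 (x) x_2 (x) ... (x) x_N, with the
   tensor product rule of the paper (Kashiwara convention):
   eps(b (x) b') = eps(b) + max(0, eps(b') - phi(b)),
   phi(b (x) b') = phi(b') + max(0, phi(b) - eps(b')). *)
Fixpoint epsw n (i : nat) (w : seq (letter n)) : nat :=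
  match w with
  | [::] => 0
  | x :: w' => eps1 i x + (epsw i w' - phi1 i x)
  end.
Fixpoint phiw n (i : nat) (w : seq (letter n)) : nat :=
  match w with
  | [::] => 0
  | x :: w' => phiw i w' + (phi1 i x - epsw i w')
  end.

Definition in_B_delta n (delta : seq nat) (b : seq (seq (letter n))) : Prop :=
  map size b = delta /\ all (@decreasing_word n) b.

(* highest weight: eps_i(b) = 0 for all i in {1..n}; B_s embeds in B_1^{(x) s}
   via x_1...x_s |-> x_1 (x) ... (x) x_s, so b is viewed as the flattened tensor *)
Definition highest_weight n (b : seq (seq (letter n))) : Prop :=
  forall i, 1 <= i <= n -> epsw i (flatten b) = 0.

Definition allowed_letter n (m : nat) (x : letter n) : bool :=
  match x with
  | Unb _ => lval x <= m
  | Bar _ => lval x <= m.-1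
  end.

From HB Require Import structures.
From mathcomp Require Import all_boot all_order all_algebra zify.
Import Order.TTheory GRing.Theory Num.Theory.

Set Implicit Arguments.
Unset Strict Implicit.
Unset Printing Implicit Defensive.

(* Let wt_v(b) be the number of letters v minus the number of letters \bar v
   in b.  For 1 <= i <= n one has phi_i - eps_i = wt_i - wt_(i+1), and
   wt_(n+1) = 0.  Prefixes of highest weight vertices are highest weight, so
   on each of them every wt_v is nonnegative and phi_i = wt_i - wt_(i+1).
   Inductively, the first j tensor factors only contain letters from
   {1..j, \bar(j-1)..\bar 1}.  If the (j+1)-th word contained a letter x
   outside {1..j+1, \bar j..\bar 1}, then eps_i(x) = 1 for some i > j, while
   neither the first j factors nor the letters of the decreasing word that
   precede x (all >= x) contribute positively to wt_i.  Hence phi_i of the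
   prefix before x vanishes, and appending x would make eps_i positive. *)

Definition letter_to_sum n (x : letter n) : 'I_n + 'I_n :=
  match x with Unb i => inl i | Bar i => inr i end.

Definition sum_to_letter n (u : 'I_n + 'I_n) : letter n :=
  match u with inl i => Unb i | inr i => Bar i end.

Lemma letter_to_sumK n : cancel (@letter_to_sum n) (@sum_to_letter n).
Proof. by case. Qed.

HB.instance Definition _ n :=
  Equality.copy (letter n) (can_type (@letter_to_sumK n)).

Section TypeCCrystal.

Variable n : nat.
Implicit Types (i j k v : nat) (x y : letter n) (p s w : seq (letter n)).

Lemma epsw_phiw_cat i p s :
  epsw i (p ++ s) = epsw i p + (epsw i s - phiw i p) /\
  phiw i (p ++ s) = phiw i s + (phiw i p - epsw i s).
Proof.
elim: p => [|x p [IHeps IHphi]] /=; first lia.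
by rewrite IHeps IHphi; split; lia.
Qed.

Lemma epsw_cat i p s : epsw i (p ++ s) = epsw i p + (epsw i s - phiw i p).
Proof. exact: (epsw_phiw_cat i p s).1. Qed.

Definition wt1 v x : int :=
  match x with
  | Unb j => if j.+1 == v then 1 else 0
  | Bar j => if j.+1 == v then -1 else 0
  end%R.

Definition wt v w : int := (\sum_(x <- w) wt1 v x)%R.

Lemma wt_cons v x w : (wt v (x :: w) = wt1 v x + wt v w)%R.
Proof. exact: big_cons. Qed.

Lemma wt_cat v p s : (wt v (p ++ s) = wt v p + wt v s)%R.
Proof. exact: big_cat. Qed.

Lemma wt_le0 v w : {in w, forall x, wt1 v x <= 0}%R -> (wt v w <= 0)%R.
Proof. by move=> wt1_le0; rewrite /wt big_seq; apply: sumr_le0. Qed.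

Lemma wt_out_of_range w : wt n.+1 w = 0%R.
Proof.
by rewrite /wt big1_seq // => -[] j _ /=; have := ltn_ord j; case: eqP; lia.
Qed.

Lemma phi1_sub_eps1 i x : 0 < i <= n ->
  ((phi1 i x)%:Z - (eps1 i x)%:Z = wt1 i x - wt1 i.+1 x)%R.
Proof.
move=> i_range; case: x => j; have := ltn_ord j;
  rewrite /phi1 /eps1 /wt1 /=; case: (ltnP i n) => /= ? ?;
  by repeat case: eqP => /=; lia.
Qed.

Lemma phiw_sub_epsw i w : 0 < i <= n ->
  ((phiw i w)%:Z - (epsw i w)%:Z = wt i w - wt i.+1 w)%R.
Proof.
move=> i_range; elim: w => [|x w IHw] /=; first by rewrite /wt !big_nil.
by rewrite !wt_cons; have := phi1_sub_eps1 x i_range; lia.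
Qed.

Definition hw_word w := forall i, 0 < i <= n -> epsw i w = 0.

Lemma hw_word_prefix p s : hw_word (p ++ s) -> hw_word p.
Proof.
by move=> hw_ps i i_range; have := hw_ps i i_range; rewrite epsw_cat; lia.
Qed.

Lemma hw_word_phiw i w : hw_word w -> 0 < i <= n ->
  ((phiw i w)%:Z = wt i w - wt i.+1 w)%R.
Proof. by move=> hw_w i_range; rewrite -phiw_sub_epsw // hw_w // subr0. Qed.

Lemma hw_word_wt_ge0 v w : hw_word w -> 0 < v <= n.+1 -> (0 <= wt v w)%R.
Proof.
move=> hw_w v_range; rewrite -(wt_out_of_range w).
have wt_antitone : {in [pred k | 0 < k <= n.+1] &,
    {homo wt^~ w : k l / k <= l >-> (k >= l)%R}}.
  apply: homo_leq_in => [k|k l r|k l /andP[? ?] /andP[? ?] r|].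
  - exact: lexx.
  - by move=> ? ?; lia.
  - by rewrite inE; lia.
  - move=> k /andP[? ?] /andP[? ?]; have k_range : 0 < k <= n by lia.
    by have := hw_word_phiw hw_w k_range; lia.
by apply: (wt_antitone v n.+1); rewrite ?inE /=; lia.
Qed.

Lemma hw_word_rcons_eps1 i p x : hw_word (rcons p x) -> 0 < i <= n ->
  ((eps1 i x)%:Z <= wt i p - wt i.+1 p)%R.
Proof.
move=> hw_px i_range; have hw_p : hw_word p.
  by apply: (@hw_word_prefix _ [:: x]); rewrite cats1.
have := hw_px i i_range; rewrite -cats1 epsw_cat /= hw_p // addn0.
by have := hw_word_phiw hw_p i_range; lia.
Qed.

Lemma allowed_letterW j k x :
  j <= k -> allowed_letter j x -> allowed_letter k x.
Proof. by case: x => l /=; lia. Qed.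

Lemma allowed_letter_wt1_le0 j k x :
  allowed_letter j x -> j < k -> (wt1 k x <= 0)%R.
Proof. by case: x => l /=; case: eqP; lia. Qed.

Lemma allowed_wt_le0 j k p :
  all (allowed_letter j) p -> j < k -> (wt k p <= 0)%R.
Proof.
move=> /allP allowed_p j_lt_k; apply: wt_le0 => x /allowed_p allowed_x.
exact: allowed_letter_wt1_le0 allowed_x j_lt_k.
Qed.

(* The index i is the one of the arrow ending in x: i = x - 1 for an unbarred
   x, and i = |x| for a barred one. *)
Lemma not_allowed_letter_eps1 j x : ~~ allowed_letter j.+1 x ->
  exists i, [/\ j < i <= n, eps1 i x = 1
              & forall y, lrank x <= lrank y -> (wt1 i y <= 0)%R].
Proof.
case: x => l /= not_allowed; have l_lt_n := ltn_ord l.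
- exists l; split; first lia.
    by rewrite /eps1 /= l_lt_n eqxx.
  by case=> k /=; case: eqP; lia.
- exists l.+1; split; first lia.
    by rewrite /eps1 /= eqxx.
  by case=> k /=; have := ltn_ord k; case: eqP; lia.
Qed.

Lemma decreasing_word_prefix_ge w1 x w2 :
  decreasing_word (w1 ++ x :: w2) -> all (fun y => lrank x <= lrank y) w1.
Proof.
have lrank_ge_trans : transitive (fun x y : letter n => lrank y <= lrank x).
  by move=> y z t le_yz le_ty; apply: leq_trans le_ty le_yz.
rewrite /decreasing_word (sorted_pairwise lrank_ge_trans) pairwise_cat.
case/and3P=> /allrelP ge_w1 _ _; apply/allP => y y_w1.
exact: ge_w1 y x y_w1 (mem_head x w2).
Qed.

Lemma decreasing_word_allowed j pre w s :
  all (allowed_letter j) pre -> hw_word (pre ++ w ++ s) -> decreasing_word w ->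
  all (allowed_letter j.+1) w.
Proof.
move=> allowed_pre hw_pws dec_w; apply/allP => x /splitPr x_w.
case: x_w dec_w hw_pws => w1 w2 /decreasing_word_prefix_ge /allP ge_w1.
rewrite -catA cat_cons catA -cat_rcons => /hw_word_prefix hw_w1x.
have hw_w1 : hw_word (pre ++ w1).
  by apply: (@hw_word_prefix _ [:: x]); rewrite cats1.
apply: contraT => /not_allowed_letter_eps1[i [/andP[j_lt_i i_le_n] eps1_x]].
move=> le0_wt1.
have i_range : 0 < i <= n by lia.
have eps1_le_phi := hw_word_rcons_eps1 hw_w1x i_range.
have wt_succ_ge0 : (0 <= wt i.+1 (pre ++ w1))%R.
  by apply: hw_word_wt_ge0 hw_w1 _; lia.
have wt_pre_le0 := allowed_wt_le0 allowed_pre j_lt_i.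
have wt_w1_le0 : (wt i w1 <= 0)%R.
  by apply: wt_le0 => y /ge_w1; apply: le0_wt1.
by move: eps1_le_phi wt_succ_ge0; rewrite eps1_x wt_cat; lia.
Qed.

Lemma hw_tensor_allowed j pre b :
  all (allowed_letter j) pre -> hw_word (pre ++ flatten b) ->
  all (@decreasing_word n) b ->
  all (fun bj => all (allowed_letter (j + size b)) bj) b.
Proof.
elim: b j pre => [//|w b IHb] j pre allowed_pre hw_b /= /andP[dec_w dec_b].
have allowed_w := decreasing_word_allowed allowed_pre hw_b dec_w.
rewrite addnS -addSn; apply/andP; split.
  by apply: sub_all allowed_w => x; apply: allowed_letterW; lia.
apply: IHb (pre ++ w) _ _ dec_b; last by rewrite -catA.
by rewrite all_cat allowed_w andbT; apply: sub_all allowed_pre => x;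
  apply: allowed_letterW.
Qed.

End TypeCCrystal.

Theorem lemma25 (n m : nat) (delta : seq nat) (b : seq (seq (letter n))) :
  m <= n -> size delta = m ->
  in_B_delta delta b -> highest_weight b ->
  all (fun bj => all (allowed_letter m) bj) b.
Proof.
move=> _ <- [<- dec_b] hw_b; rewrite size_map.
exact: (@hw_tensor_allowed n 0 [::]).
Qed.
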